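(* For every integer $1\le m\le D/4$, the Markov chain on $\Sigma_m$ induced by the local automaton gate set $\mathcal G$ is aperiodic: for any $S,S'\in\Sigma_m$ there exists $\ell_{\min}$ such that for every $\ell\ge\ell_{\min}$ there is a sequence of $\ell$ gates $u_1,\dots,u_\ell\in\mathcal G$ with $u_\ell\circ\cdots\circ u_1(S)=S'$.
   Context: Consider $N\ge3$ qubits on a ring (site indices modulo $N$), bitstrings $\mathbf z\in\{0,1\}^N$, $D=2^N$. The gate set is $\mathcal G=\{u_{iab}: i\in\{1,\dots,N\},\ a,b\in\{0,1\}\}$, where $u_{iab}$ is the permutation of $\{0,1\}^N$ that flips bit $i$ if and only if bit $i-1$ equals $a$ and bit $i+1$ equals $b$. $\Sigma_m$ is the set of subsets of $\{0,1\}^N$ of cardinality $m$, with $u(S)=\{u(\mathbf z):\mathbf z\in S\}$. The induced Markov chain has transition matrix $\Gamma_{S,S'}=\frac{1}{|\mathcal G|}\sum_{u\in\mathcal G}\delta_{S',u(S)}$. *)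

From mathcomp Require Import all_boot.
Set Implicit Arguments. Unset Strict Implicit. Unset Printing Implicit Defensive.

(* Bitstrings z in {0,1}^N, sites 'I_N (i.e. 0..N-1, a relabelling of 1..N), on a ring. *)
Definition bitstring (N : nat) := {ffun 'I_N -> bool}.

Definition gate_label (N : nat) := ('I_N * bool * bool)%type.

Definition gate (N : nat) (g : gate_label N) (z : bitstring N) : bitstring N :=
  let: (i, a, b) := g in
  if (z (ord_pred i) == a) && (z (ordS i) == b)
  then [ffun j => if j == i then ~~ z j else z j]
  else z.

(* u_l o ... o u_1 for gs = [:: u_1; ...; u_l] (u_1 applied first). *)
Definition compose_gates (N : nat) (gs : seq (gate_label N)) (z : bitstring N)
  : bitstring N :=
  foldl (fun z g => gate g z) z gs.

Definition apply_gates (N : nat) (gs : seq (gate_label N)) (S : {set bitstring N})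
  : {set bitstring N} :=
  [set compose_gates gs z | z in S].

From mathcomp Require Import all_boot fingroup perm zify.
Set Implicit Arguments. Unset Strict Implicit. Unset Printing Implicit Defensive.

(* Every gate flips one bit under a control on its two neighbours. Composing
   such controlled flips into group commutators enlarges the controls, until
   bit j can be flipped under any control on a subcube that leaves some site
   k != j free. Xor-ing two controls on all sites but j realizes the product of
   the transpositions (x, x^j) and (u, u^j); when 4|S| <= 2^N, counting gives a
   u for which the second transposition fixes S, so every hypercube-edge
   transposition acts on S as a product of gates. Conjugating along paths gives
   all transpositions, hence any two m-sets are connected. Aperiodicity comes
   from an m-set S0 on which one gate acts trivially: a path S -> S0 -> S' can
   be padded with that gate to any larger length. *)

Section Flips.
Variable N : nat.
Notation bits := (bitstring N).
Implicit Types (i j l : 'I_N) (w x y z : bits) (P : pred bits) (A B C : {set 'I_N}).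

Definition flip i w : bits := [ffun l => if l == i then ~~ w l else w l].

Lemma flipK i : involutive (flip i).
Proof. by move=> w; apply/ffunP=> l; rewrite !ffunE; case: eqP => // _; apply: negbK. Qed.

Lemma flip_at i w : flip i w i = ~~ w i.
Proof. by rewrite ffunE eqxx. Qed.

Lemma flip_ne i l w : l != i -> flip i w l = w l.
Proof. by rewrite ffunE => /negbTE ->. Qed.

Lemma flipC i j w : flip i (flip j w) = flip j (flip i w).
Proof. by apply/ffunP=> l; rewrite !ffunE; do 2 case: eqP. Qed.

Definition mismatch x y := [set l | x l != y l].

Lemma in_mismatch l x y : (l \in mismatch x y) = (x l != y l).
Proof. by rewrite inE. Qed.

Lemma mismatch_eq0 x y : (mismatch x y == set0) = (x == y).
Proof.
apply/eqP/eqP => [D0|->]; last by apply/setP => l; rewrite in_mismatch eqxx inE.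
by apply/ffunP => l; apply/eqP/negPn; rewrite -in_mismatch D0 inE.
Qed.

Lemma mismatch_flip j x y : j \in mismatch x y -> mismatch (flip j x) y = mismatch x y :\ j.
Proof.
rewrite in_mismatch => xyj; apply/setP => l; rewrite !inE.
have [->|lj] := eqVneq l j; last by rewrite flip_ne.
by rewrite flip_at; move: xyj; case: (x j); case: (y j).
Qed.

Definition flip_invariant i P := forall w, P (flip i w) = P w.

Definition cflip i P w : bits := if P w then flip i w else w.

Lemma cflipK i P : flip_invariant i P -> involutive (cflip i P).
Proof. by move=> hP w; rewrite /cflip; case Pw: (P w); rewrite ?hP Pw ?flipK. Qed.

Definition agree C z w := [forall l in C, w l == z l].

Lemma agreeU A B z w : agree (A :|: B) z w = agree A z w && agree B z w.
Proof.
apply/forall_inP/andP => [H|[/forall_inP HA /forall_inP HB] l].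
  by split; apply/forall_inP => l lA; apply: H; rewrite inE lA ?orbT.
by rewrite inE => /orP [] ?; [apply: HA | apply: HB].
Qed.

Lemma agree1 l z w : agree [set l] z w = (w l == z l).
Proof.
apply/forall_inP/idP => [H|H k]; first exact: H (set11 l).
by rewrite inE => /eqP ->.
Qed.

Lemma agree_eq_on C x y w : {in C, x =1 y} -> agree C x w = agree C y w.
Proof. by move=> xy; apply: eq_forallb_in => l /xy ->. Qed.

Lemma agree_flip_invariant i C z : i \notin C -> flip_invariant i (agree C z).
Proof.
move=> iC w; apply: eq_forallb_in => l lC.
by rewrite flip_ne //; apply: contraNneq iC => <-.
Qed.

Lemma agree_flip_addb i B z w : i \in B ->
  agree B z w (+) agree B z (flip i w) = agree (B :\ i) z w.
Proof.
move=> iB; rewrite -{1 2}(setD1K iB) !agreeU !agree1 flip_at.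
rewrite (agree_flip_invariant z) ?setD11 //.
by case: (w i); case: (z i); case: agree.
Qed.

Lemma agree_flipl i C z w : agree C (flip i z) w = agree C z (flip i w).
Proof.
apply: eq_forallb => l; rewrite !ffunE.
by case: (l == i); case: (l \in C); case: (w l); case: (z l).
Qed.

Lemma agree_setC1 i x w : agree [set~ i] x w = (w == x) || (w == flip i x).
Proof.
apply/forall_inP/idP => [H|]; last first.
  by case/orP => /eqP-> l; rewrite !inE => li; rewrite ?flip_ne.
have eq_off_i l : l != i -> w l = x l by move=> li; apply/eqP/H; rewrite !inE.
apply/orP; case: (eqVneq (w i) (x i)) => [wxi|wxi]; [left|right]; apply/eqP/ffunP => l.
  by case: (eqVneq l i) => [->|/eq_off_i].
case: (eqVneq l i) => [->|li]; last by rewrite flip_ne // eq_off_i.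
by rewrite flip_at; move: wxi; case: (w i); case: (x i).
Qed.

End Flips.

Section Gates.
Variable N : nat.
Notation bits := (bitstring N).
Implicit Types (gs : seq (gate_label N)) (i j : 'I_N) (w : bits) (P Q : pred bits).

Lemma compose_gates_cat gs1 gs2 w :
  compose_gates (gs1 ++ gs2) w = compose_gates gs2 (compose_gates gs1 w).
Proof. exact: foldl_cat. Qed.

Definition realizable (f : bits -> bits) :=
  exists gs : seq (gate_label N), compose_gates gs =1 f.

Lemma realizable_id : realizable id.
Proof. by exists [::]. Qed.

Lemma realizable_comp f g : realizable f -> realizable g -> realizable (g \o f).
Proof.
by move=> [gs1 H1] [gs2 H2]; exists (gs1 ++ gs2) => w; rewrite compose_gates_cat H1 H2.
Qed.

Lemma realizable_eq f g : f =1 g -> realizable f -> realizable g.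
Proof. by move=> fg [gs H]; exists gs => w; rewrite H fg. Qed.

Definition controllable i P := realizable (cflip i P).

Lemma controllable_eq i P Q : P =1 Q -> controllable i P -> controllable i Q.
Proof. by move=> PQ; apply: realizable_eq => w; rewrite /cflip PQ. Qed.

Lemma controllable_gate i a b :
  controllable i (fun w => (w (ord_pred i) == a) && (w (ordS i) == b)).
Proof. by exists [:: (i, a, b)]. Qed.

Lemma controllable_pred0 i : controllable i pred0.
Proof. exact: realizable_eq realizable_id. Qed.

Lemma cflip_on i P w : P w -> cflip i P w = flip i w.
Proof. by rewrite /cflip => ->. Qed.

Lemma cflip_off i P w : ~~ P w -> cflip i P w = w.
Proof. by rewrite /cflip => /negbTE ->. Qed.

Lemma controllable_addb i P Q : flip_invariant i Q ->
  controllable i P -> controllable i Q -> controllable i (fun w => P w (+) Q w).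
Proof.
move=> Qi cP cQ; apply: realizable_eq (realizable_comp cP cQ) => w /=.
by rewrite /cflip; case: (P w); rewrite ?Qi; case: (Q w); rewrite ?flipK.
Qed.

Lemma controllable_commutator i j P Q :
  flip_invariant i P -> flip_invariant j P -> flip_invariant j Q ->
  controllable i P -> controllable j Q ->
  controllable j (fun w => P w && (Q w (+) Q (flip i w))).
Proof.
move=> Pi Pj Qj cP cQ.
apply: realizable_eq (realizable_comp (realizable_comp (realizable_comp cQ cP) cQ) cP) => w /=.
have Pc v : P (cflip j Q v) = P v by rewrite /cflip; case: ifP; rewrite ?Pj.
have Qij v : Q (flip i (flip j v)) = Q (flip i v) by rewrite flipC Qj.
case Pw: (P w).
- rewrite [cflip i P (cflip j Q w)]cflip_on ?Pc // cflip_on ?Pc ?Pi ?Pc //.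
  rewrite /cflip /=; case: (Q w); rewrite ?Qij; case: (Q (flip i w));
    rewrite /= ?andbT ?andbF ?Pw ?flipK //.
  + by rewrite flipC !flipK.
  + by rewrite flipC flipK.
- rewrite [cflip i P (cflip j Q w)]cflip_off ?Pc ?Pw // cflipK //.
  by rewrite !cflip_off ?Pw.
Qed.

End Gates.

Section Controls.
Variable N : nat.
Hypothesis N_gt2 : 2 < N.
Notation bits := (bitstring N).
Implicit Types (i j k l a b : 'I_N) (w x z u : bits) (A B C : {set 'I_N}).

Lemma iter_ordS_val i d : iter d (@ordS N) i = (i + d) %% N :> nat.
Proof.
elim: d => [|d IH]; first by rewrite addn0 modn_small.
by rewrite iterS /= IH -addn1 modnDml addn1 addnS.
Qed.

Lemma iter_ordS_neq i d : 0 < d < N -> iter d (@ordS N) i != i.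
Proof.
move=> /andP[d_gt0 d_ltN]; apply/eqP => /(congr1 (@nat_of_ord N)) /eqP.
rewrite iter_ordS_val -{2}(modn_small (ltn_ord i)) -{2}[nat_of_ord i]addn0 eqn_modDl.
by rewrite mod0n modn_small // eqn0Ngt d_gt0.
Qed.

Lemma iter_ordS_onto i j : j != i -> exists2 d, 0 < d < N & iter d (@ordS N) i = j.
Proof.
move=> ji; have := ltn_ord i; have := ltn_ord j.
have {}ji : j <> i :> nat by move/val_inj/eqP; apply/negP.
have [lt_ij|le_ji] := ltnP i j; [exists (j - i) | exists (j + N - i)]; try lia.
all: apply: ord_inj; rewrite iter_ordS_val.
  by rewrite subnKC ?modn_small // ltnW.
have -> : i + (j + N - i) = j + N by lia.
by rewrite modnDr modn_small.
Qed.

Lemma ordS_neq i : ordS i != i.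
Proof. by apply: (iter_ordS_neq i (d := 1)); rewrite (ltn_trans _ N_gt2). Qed.

Lemma ord_pred_neq i : ord_pred i != i.
Proof. by rewrite -(inj_eq (@ordS_inj N)) ord_predK eq_sym ordS_neq. Qed.

Lemma ord_pred_neq_ordS i : ord_pred i != ordS i.
Proof.
by rewrite -(inj_eq (@ordS_inj N)) ord_predK eq_sym (iter_ordS_neq i (d := 2)).
Qed.

Lemma controllable_merge z i j A B : i \notin A -> j \notin A -> i \in B -> j \notin B ->
  controllable i (agree A z) -> controllable j (agree B z) ->
  controllable j (agree (A :|: B :\ i) z).
Proof.
move=> iA jA iB jB cA cB.
have := controllable_commutator (agree_flip_invariant z iA) (agree_flip_invariant z jA)
  (agree_flip_invariant z jB) cA cB.
by apply: controllable_eq => w; rewrite agree_flip_addb // agreeU.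
Qed.

Lemma controllable_agree_succ z j : controllable j (agree [set ordS j] z).
Proof.
set zs := z (ordS j).
have gate_inv : flip_invariant j (fun w => (w (ord_pred j) == true) && (w (ordS j) == zs)).
  by move=> w; rewrite !flip_ne ?ord_pred_neq ?ordS_neq.
have := controllable_addb gate_inv (controllable_gate j false zs) (controllable_gate j true zs).
apply: controllable_eq => w; rewrite agree1.
by case: (w (ord_pred j)); rewrite /= ?andbF ?addbF.
Qed.

Lemma controllable_agree_pred_succ z j :
  controllable j (agree [set ord_pred j; ordS j] z).
Proof. by apply: controllable_eq (controllable_gate j _ _) => w; rewrite agreeU !agree1. Qed.

Lemma controllable_agree1 z j a : a != j -> controllable j (agree [set a] z).
Proof.
case/iter_ordS_onto => d /andP[d_gt0 d_ltN] <-.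
elim: d d_gt0 d_ltN => [//|[|d] IH _ d_ltN]; first exact: controllable_agree_succ.
set k := iter d.+1 (@ordS N) j.
have := controllable_merge (A := [set ordS k]) (B := [set k]) (z := z) _ _ (set11 k) _
  (controllable_agree_succ z k) (IH isT (ltnW d_ltN)).
rewrite setDv setU0; apply; rewrite !inE eq_sym.
- exact: ordS_neq.
- exact: (iter_ordS_neq j (d := d.+2)).
- exact: (iter_ordS_neq j (d := d.+1) (ltnW d_ltN)).
Qed.

Lemma controllable_agree_pred z j b : b != j ->
  controllable j (agree [set ord_pred j; b] z).
Proof.
move=> bj; have [->|bs] := eqVneq b (ordS j); first exact: controllable_agree_pred_succ.
have [->|bp] := eqVneq b (ord_pred j).
  by rewrite setUid; apply/controllable_agree1/ord_pred_neq.
have c_succ_pred : controllable j (agree [set ordS j; ord_pred j] z).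
  by rewrite setUC; apply: controllable_agree_pred_succ.
have := controllable_merge _ _ (setU11 _ _) _ (controllable_agree1 z bs) c_succ_pred.
rewrite setU1K ?inE 1?eq_sym ?ord_pred_neq_ordS // setUC.
apply=> //; first by rewrite eq_sym.
by rewrite !(eq_sym j) (negbTE (ordS_neq j)) (negbTE (ord_pred_neq j)).
Qed.

Lemma controllable_agree2 z j a b : a != j -> b != j ->
  controllable j (agree [set a; b] z).
Proof.
move=> aj bj; have [->|ap] := eqVneq a (ord_pred j); first exact: controllable_agree_pred.
have [->|bp] := eqVneq b (ord_pred j); first by rewrite setUC; apply: controllable_agree_pred.
have := controllable_merge _ _ (setU11 _ _) _
  (controllable_agree1 z ap) (controllable_agree_pred z bj).
rewrite setU1K ?inE 1?eq_sym //; apply=> //; rewrite eq_sym //.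
by rewrite !(eq_sym j) (negbTE (ord_pred_neq j)) (negbTE bj).
Qed.

Lemma controllable_agree z j k C : k != j -> j \notin C -> k \notin C -> C != set0 ->
  controllable j (agree C z).
Proof.
have [n] := ubnP #|C|; elim: n => // n IH in j k C *.
rewrite ltnS => C_le kj jC kC /set0Pn[c cC].
have cj : c != j by apply: contraNneq jC => <-.
have ck : c != k by apply: contraNneq kC => <-.
have [C1|C1] := eqVneq (C :\ c) set0.
  by rewrite -(setD1K cC) C1 setU0; apply: controllable_agree1.
have ltC : #|C :\ c| < n by apply: leq_trans C_le; apply/proper_card/properD1.
have := controllable_merge _ _ (setU11 _ _) _ (IH k j (C :\ c) ltC _ _ _ C1)
  (controllable_agree2 z kj cj).
rewrite setU1K ?inE 1?eq_sym // setUC setD1K //.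
apply; rewrite ?inE ?(negbTE kC) ?(negbTE jC) ?andbF //.
  by rewrite !(eq_sym j) (negbTE kj) (negbTE cj).
by rewrite eq_sym.
Qed.

Lemma setC2_neq0 j k : ~: [set j; k] != set0.
Proof.
rewrite -card_gt0; have := cardsC [set j; k]; have := cards2 j k.
by rewrite card_ord => ->; case: (j != k); lia.
Qed.

(* A flip controlled on all sites but j, i.e. a single transposition, is not
   covered by controllable_agree (it needs a free site); the xor of two is. *)
Lemma controllable_agree_setC1_addb j x u :
  controllable j (fun w => agree [set~ j] x w (+) agree [set~ j] u w).
Proof.
have [n] := ubnP #|[set~ j] :&: mismatch x u|; elim: n => // n IH in x *.
rewrite ltnS => D_le; have [/eqP D0|[k]] := set_0Vmem ([set~ j] :&: mismatch x u).
  apply: controllable_eq (controllable_pred0 j) => w.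
  rewrite (@agree_eq_on _ _ x u) ?addbb // => l lj; apply/eqP; apply: contraTT D0 => xul.
  by apply/set0Pn; exists l; rewrite inE lj in_mismatch.
rewrite inE => /andP[kj xuk]; have {}kj : k != j by move: kj; rewrite !inE.
have c_flip : controllable j (fun w => agree [set~ j] x w (+) agree [set~ j] (flip k x) w).
  apply: controllable_eq (controllable_agree x kj _ _ (setC2_neq0 j k)) => [w||].
  - by rewrite agree_flipl agree_flip_addb ?inE // setDE -setCU.
  - by rewrite !inE eqxx.
  - by rewrite !inE eqxx orbT.
have c_rest : controllable j (fun w => agree [set~ j] (flip k x) w (+) agree [set~ j] u w).
  apply: IH; rewrite mismatch_flip // setIDA; apply: leq_trans D_le.
  by apply/proper_card/properD1; rewrite inE xuk andbT !inE.
have jC : j \notin [set~ j] by rewrite !inE eqxx.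
have inv : flip_invariant j (fun w => agree [set~ j] (flip k x) w (+) agree [set~ j] u w).
  by move=> w; rewrite !(agree_flip_invariant _ jC).
apply: controllable_eq (controllable_addb inv c_flip c_rest) => w.
by rewrite addbA addbK.
Qed.

End Controls.

Lemma imset_tperm_id (T : finType) (u v : T) (S : {set T}) :
  (u \in S) = (v \in S) -> tperm u v @: S = S.
Proof.
case uS: (u \in S) => vS.
  by apply/im_perm_on/(subset_trans (tperm_on u v)); rewrite subUset !sub1set uS -vS.
rewrite -[RHS]imset_id; apply: eq_in_imset => w wS.
rewrite tpermD //; apply: contraTneq wS => <-; [exact: negbT | exact: negbT (esym vS)].
Qed.

Lemma card_imset_perm (T : finType) (s : {perm T}) (S : {set T}) : #|s @: S| = #|S|.
Proof. exact/card_imset/perm_inj. Qed.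

Lemma imset_permM (T : finType) (s t : {perm T}) (S : {set T}) :
  (s * t)%g @: S = t @: (s @: S).
Proof. by rewrite -imset_comp; apply: eq_imset => w; rewrite permM. Qed.

Section Reachability.
Variable N : nat.
Hypothesis N_gt2 : 2 < N.
Notation bits := (bitstring N).
Implicit Types (gs : seq (gate_label N)) (j : 'I_N) (w x y u : bits) (S T U : {set bits}).

Definition reachable S T := exists gs, apply_gates gs S = T.

Lemma apply_gates_cat gs1 gs2 S :
  apply_gates (gs1 ++ gs2) S = apply_gates gs2 (apply_gates gs1 S).
Proof. by rewrite /apply_gates -imset_comp; apply: eq_imset => w; apply: compose_gates_cat. Qed.

Lemma reachable_refl S : reachable S S.
Proof. by exists [::]; apply: imset_id. Qed.

Lemma reachable_trans S T U : reachable S T -> reachable T U -> reachable S U.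
Proof. by move=> [gs1 <-] [gs2 <-]; exists (gs1 ++ gs2); rewrite apply_gates_cat. Qed.

Lemma reachable_realizable f S : realizable f -> reachable S (f @: S).
Proof. by move=> [gs fE]; exists gs; apply: eq_imset. Qed.

Lemma card_bits : #|bits| = 2 ^ N.
Proof. by rewrite card_ffun card_bool card_ord. Qed.

Lemma exists_flip_stable S j x : 4 * #|S| <= 2 ^ N ->
  exists2 u, u \notin [set x; flip j x] & (flip j u \in S) = (u \in S).
Proof.
move=> hS.
case: (pickP [pred u | (u \notin [set x; flip j x]) && ((flip j u \in S) == (u \in S))]).
  by move=> u /andP[uP /eqP uS]; exists u.
(* Otherwise S and its flip cover all strings but two: 2^N - 2 <= 2|S| <= 2^N / 2. *)
move=> unstable; exfalso.
have cover : ~: [set x; flip j x] \subset S :|: flip j @: S.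
  apply/subsetP => w; rewrite inE => wP; have := unstable w; rewrite /= wP inE.
  case: (w \in S) => //=; rewrite eqbF_neg => /negbFE fwS.
  by apply/imsetP; exists (flip j w); rewrite ?flipK.
have : #|~: [set x; flip j x]| <= #|S| + #|S|.
  apply: leq_trans (subset_leq_card cover) _; apply: leq_trans (leq_card_setU _ _) _.
  by rewrite leq_add2l leq_imset_card.
have := cardsC [set x; flip j x]; have := cards2 x (flip j x).
have : 8 <= 2 ^ N by have := @leq_exp2l 2 3 N isT; rewrite N_gt2.
rewrite card_bits; move: #|S| hS => s hS; case: (x != flip j x) => /=; lia.
Qed.

Lemma cflip_agree_setC1_addb j x u w : u \notin [set x; flip j x] ->
  cflip j (fun v => agree [set~ j] x v (+) agree [set~ j] u v) w =
  tperm x (flip j x) (tperm u (flip j u) w).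
Proof.
rewrite !inE negb_or => /andP[ux uxf].
have flip_eq v : (flip j v == flip j x) = (v == x) := inj_eq (can_inj (flipK j)) v x.
have flipl_eq v : (flip j v == x) = (v == flip j x) := can2_eq (flipK j) (flipK j) v x.
rewrite /cflip !agree_setC1; case: (tpermP u (flip j u) w) => [->|->|/eqP wu /eqP wfu].
- rewrite eqxx (negbTE ux) (negbTE uxf) /= tpermD // eq_sym ?flipl_eq ?flip_eq //.
- rewrite flipl_eq flip_eq (negbTE ux) (negbTE uxf) eqxx orbT /= flipK.
  by rewrite tpermD // eq_sym.
- rewrite (negbTE wu) (negbTE wfu) /= addbF.
  by case: tpermP => [->|->|/eqP/negbTE-> /eqP/negbTE->]; rewrite ?eqxx ?orbT ?flipK.
Qed.

Lemma reachable_tperm_flip S j x : 4 * #|S| <= 2 ^ N ->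
  reachable S (tperm x (flip j x) @: S).
Proof.
move=> hS; have [u uP uS] := exists_flip_stable j x hS.
rewrite -{2}(imset_tperm_id (esym uS)) -imset_comp.
rewrite -(eq_imset _ (fun w => cflip_agree_setC1_addb w uP)).
exact/reachable_realizable/controllable_agree_setC1_addb.
Qed.

Lemma reachable_tperm S x y : 4 * #|S| <= 2 ^ N -> reachable S (tperm x y @: S).
Proof.
have [n] := ubnP #|mismatch x y|; elim: n => // n IH in S x *.
rewrite ltnS => D_le hS; have [/eqP|[j xyj]] := set_0Vmem (mismatch x y).
  by rewrite mismatch_eq0 => /eqP->; rewrite tperm1 imset_perm1; apply: reachable_refl.
set v := flip j x; have [<-|vy] := eqVneq v y; first exact: reachable_tperm_flip.
have xy : x != y by apply: contraTneq xyj => ->; rewrite in_mismatch eqxx.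
have -> : tperm x y = (tperm x v * tperm v y * tperm x v)%g.
  by rewrite -(tpermJ_tperm vy xy) conjgE tpermV (tpermC v x) mulgA.
rewrite !imset_permM; apply: reachable_trans (reachable_tperm_flip j x hS) _.
apply: reachable_trans (reachable_tperm_flip j x _); last by rewrite !card_imset_perm.
apply: IH; last by rewrite card_imset_perm.
by rewrite mismatch_flip //; apply: leq_trans D_le; apply/proper_card/properD1.
Qed.

Lemma reachable_of_card S S' : #|S| = #|S'| -> 4 * #|S| <= 2 ^ N -> reachable S S'.
Proof.
have [n] := ubnP #|S :\: S'|; elim: n => // n IH in S *.
rewrite ltnS => D_le cS hS; have [/eqP D0|[x xSS']] := set_0Vmem (S :\: S').
  have /eqP -> : S == S' by rewrite eqEcard -setD_eq0 D0 cS /=.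
  exact: reachable_refl.
have /set0Pn[y] : S' :\: S != set0.
  rewrite -card_gt0 cardsD setIC -cS -cardsD card_gt0.
  by apply/set0Pn; exists x.
move: xSS'; rewrite !inE => /andP[xS' xS] /andP[yS yS'].
apply: reachable_trans (reachable_tperm x y hS) (IH _ _ _ _); rewrite ?card_imset_perm //.
have -> : (tperm x y @: S) :\: S' = (S :\: S') :\ x.
  apply/setP => w; rewrite !inE (can_imset_pre _ (tpermK x y)) inE.
  case: tpermP => [->|->|/eqP/negbTE-> _]; rewrite ?eqxx ?(negbTE yS) ?yS' ?andbF //.
by apply: leq_trans D_le; apply/proper_card/properD1; rewrite inE xS xS'.
Qed.

Lemma apply_gates_nseq_id g n S : {in S, forall w, gate g w = w} ->
  apply_gates (nseq n g) S = S.
Proof.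
move=> gS; rewrite /apply_gates -[RHS]imset_id; apply: eq_in_imset => w /gS gw.
by elim: n => //= n IH; rewrite gw.
Qed.

(* Gate (i, true, true) fixes every string whose bit i-1 is 0; these are half of all. *)
Lemma exists_gate_fixed_set m : 4 * m <= 2 ^ N ->
  exists S0 g, #|S0| = m /\ {in S0, forall w, gate g w = w}.
Proof.
move=> hm; have N_gt0 : 0 < N by apply: ltn_trans N_gt2.
pose i : 'I_N := Ordinal N_gt0; pose U := [set w : bits | ~~ w (ord_pred i)].
have flipU : flip (ord_pred i) @: U = ~: U.
  by apply/setP => w; rewrite (can_imset_pre _ (flipK _)) !inE flip_at negbK.
have cardU : #|U| + #|U| = 2 ^ N.
  by rewrite -{2}(card_imset _ (can_inj (flipK (ord_pred i)))) flipU cardsC card_bits.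
have /card_geqP[s [s_uniq s_size sU]] : m <= #|U| by lia.
exists [set w in s], (i, true, true); split; first by rewrite cardsE (card_uniqP s_uniq).
by move=> w; rewrite inE => /sU; rewrite inE => /negbTE wi; rewrite /gate wi.
Qed.

End Reachability.

Theorem lemma4 (N : nat) (hN : 3 <= N) (m : nat) (hm1 : 1 <= m) (hm2 : 4 * m <= 2 ^ N)
  (S S' : {set bitstring N}) (hS : #|S| = m) (hS' : #|S'| = m) :
  exists lmin : nat, forall l : nat, lmin <= l ->
    exists gs : seq (gate_label N), size gs = l /\ apply_gates gs S = S'.
Proof.
have [S0 [g [cS0 gS0]]] := exists_gate_fixed_set hN hm2.
have [gs1 e1] : reachable S S0 by apply: (reachable_of_card hN); rewrite hS ?cS0.
have [gs2 e2] : reachable S0 S' by apply: (reachable_of_card hN); rewrite cS0 ?hS'.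
exists (size gs1 + size gs2) => l hl.
exists (gs1 ++ nseq (l - (size gs1 + size gs2)) g ++ gs2); split.
  by rewrite !size_cat size_nseq; lia.
by rewrite !apply_gates_cat e1 apply_gates_nseq_id.
Qed.
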